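(* Let $X$ be a Banach space as described in the context, let $f\in X$ not be a polynomial, and suppose there exists a sequence $p_n\in\mathcal{P}_n[\mathbb{Z}]$ with $\lim_{n\to\infty}\|f-p_n\|=0$. Then the radius of convergence of the Taylor series of $f$ in powers of $z$ is at most $1$.
   Context: $\mathbb{D}=\{z\in\mathbb{C}:|z|<1\}$. $X$ is a complex Banach space of functions analytic in $\mathbb{D}$ whose norm $\|\cdot\|$ satisfies: (i) $\|f(\cdot\, e^{it})\|=\|f(\cdot)\|$ for all $t\in\mathbb{R}$ and $f\in X$; (ii) $\|f\|<\infty$ for every entire function $f$; (iii) for all $f\in X$ and $g\in L[0,2\pi]$, $\big\|\frac{1}{2\pi}\int_0^{2\pi} f(ze^{it})g(t)\,dt\big\|\le \frac{1}{2\pi}\int_0^{2\pi}|g(t)|\,dt\cdot\|f\|$. A complex number is called an integer if its real and imaginary parts are integers; $\mathcal{P}_n[\mathbb{Z}]$ is the set of complex polynomials of degree at most $n-1$ with integer coefficients in this sense. *)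

From HB Require Import structures.
From mathcomp Require Import all_boot all_order all_algebra.
From mathcomp Require Import complex.
From mathcomp Require Import all_classical all_reals all_analysis.
Set Implicit Arguments. Unset Strict Implicit. Unset Printing Implicit Defensive.
Import Order.TTheory GRing.Theory Num.Theory.
Local Open Scope ring_scope.
Local Open Scope classical_set_scope.

Section Defs.
Variable R : realType.
Local Notation C := R[i].

Definition cabs (z : C) : R := Num.sqrt (complex.Re z ^+ 2 + complex.Im z ^+ 2).
Definition ofR (x : R) : C := (x +i* 0)%C.
Definition cis (t : R) : C := (cos t +i* sin t)%C.
Definition disc : set C := [set z | cabs z < 1].

Definition ccvg (u : nat -> C) (l : C) : Prop :=
  (fun n => cabs (u n - l)) @ \oo --> 0%R.

Definition power_series_on (a : nat -> C) (f : C -> C) (A : set C) : Prop :=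
  forall z, A z -> ccvg (fun n => \sum_(k < n) a k * z ^+ k) (f z).

(* f analytic in D (equivalently: its Taylor series at 0 converges to it on D) *)
Definition analytic_in_disc (f : C -> C) : Prop :=
  exists a, power_series_on a f disc.

Definition entire (f : C -> C) : Prop := exists a, power_series_on a f setT.

Definition conv_radius (a : nat -> C) : \bar R :=
  ereal_sup [set r%:E | r in
    [set r : R | 0 <= r /\ exists M : R, forall k, cabs (a k) * r ^+ k <= M]].

Definition Iv : set R := `[0, 2 * pi]%classic.
Definition cint (h : R -> C) : C :=
  (Rintegral (@lebesgue_measure R) Iv (fun t => complex.Re (h t))
   +i* Rintegral (@lebesgue_measure R) Iv (fun t => complex.Im (h t)))%C.

Definition L1 (g : R -> C) : Prop :=
  (@lebesgue_measure R).-integrable Iv (EFin \o (fun t => complex.Re (g t))) /\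
  (@lebesgue_measure R).-integrable Iv (EFin \o (fun t => complex.Im (g t))).

Record BanachFunSpace (X : set (C -> C)) (nrm : (C -> C) -> R) : Prop := {
  bfs_analytic : forall f, X f -> analytic_in_disc f;
  (* elements are functions on D: only the values on D matter *)
  bfs_local : forall f g, (forall z, disc z -> f z = g z) ->
                (X f <-> X g) /\ nrm f = nrm g;
  bfs_zero : X (fun _ => 0);
  bfs_add : forall f g, X f -> X g -> X (fun z => f z + g z);
  bfs_scale : forall (c : C) f, X f -> X (fun z => c * f z);
  bfs_ge0 : forall f, X f -> 0 <= nrm f;
  bfs_eq0 : forall f, X f -> nrm f = 0 -> forall z, disc z -> f z = 0;
  bfs_homog : forall (c : C) f, X f -> nrm (fun z => c * f z) = cabs c * nrm f;
  bfs_triangle : forall f g, X f -> X g ->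
                   nrm (fun z => f z + g z) <= nrm f + nrm g;
  bfs_complete : forall u : nat -> C -> C, (forall n, X (u n)) ->
    (forall e : R, 0 < e -> exists N, forall m n, (N <= m)%N -> (N <= n)%N ->
        nrm (fun z => u m z - u n z) < e) ->
    exists f, X f /\ (fun n => nrm (fun z => u n z - f z)) @ \oo --> 0%R
}.

Definition rot_invariant (X : set (C -> C)) (nrm : (C -> C) -> R) : Prop :=
  forall (t : R) f, X f ->
    X (fun z => f (z * cis t)) /\ nrm (fun z => f (z * cis t)) = nrm f.

(* (ii) every entire function has finite norm, i.e. belongs to X *)
Definition contains_entire (X : set (C -> C)) : Prop :=
  forall f, entire f -> X f.

Definition conv_ineq (X : set (C -> C)) (nrm : (C -> C) -> R) : Prop :=
  forall f g, X f -> L1 g ->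
    let h := fun z => ofR (2 * pi)^-1 * cint (fun t => f (z * cis t) * g t) in
    X h /\
    nrm h <= (2 * pi)^-1 * Rintegral (@lebesgue_measure R) Iv (fun t => cabs (g t))
             * nrm f.

(* P_n[Z]: polynomials of degree <= n-1 with Gaussian integer coefficients *)
Definition int_poly (n : nat) (p : {poly C}) : Prop :=
  (size p <= n)%N /\
  forall i, complex.Re p`_i \is a Num.int /\ complex.Im p`_i \is a Num.int.

Definition is_poly_on_disc (f : C -> C) : Prop :=
  exists q : {poly C}, forall z, disc z -> f z = q.[z].

End Defs.

(* Convolving f with t |-> e^{-ikt} isolates the monomial a_k z^k of its Taylor
   series, so by (iii) the coefficient functional f |-> a_k is bounded on X.
   Hence a_k is the limit of the k-th coefficients of the p_n, which are
   Gaussian integers, so a_k is itself a Gaussian integer.  If the radius of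
   convergence exceeded 1, then |a_k| r^k would stay bounded for some r > 1,
   forcing |a_k| < 1, i.e. a_k = 0, for all large k: f would be a polynomial. *)

From HB Require Import structures.
From mathcomp Require Import all_boot all_order all_algebra.
From mathcomp Require Import complex.
From mathcomp Require Import all_classical all_reals all_analysis.
From mathcomp Require Import ring lra.
From mathcomp Require measurable_realfun.
Import Order.TTheory GRing.Theory Num.Theory.
Import numFieldNormedType.Exports.
Local Open Scope ring_scope.
Local Open Scope classical_set_scope.

Section ComplexModulus.
Context {R : realType}.
Local Notation C := R[i].
Local Notation Re := complex.Re.
Local Notation Im := complex.Im.
Local Open Scope complex_scope.
Implicit Types (z w : C) (x y : R).

Lemma cabsC z : (cabs z)%:C = `|z|.
Proof. by case: z => a b; rewrite normc_def. Qed.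

Lemma cabs_ge0 z : 0 <= cabs z.
Proof. by rewrite /cabs sqrtr_ge0. Qed.

Lemma cabsM z w : cabs (z * w) = cabs z * cabs w.
Proof. by apply: complexI; rewrite rmorphM /= !cabsC normrM. Qed.

Lemma cabsD z w : cabs (z + w) <= cabs z + cabs w.
Proof. by rewrite -lecR rmorphD /= !cabsC ler_normD. Qed.

Lemma cabsN z : cabs (- z) = cabs z.
Proof. by apply: complexI; rewrite !cabsC normrN. Qed.

Lemma cabsB z w : cabs (z - w) = cabs (w - z).
Proof. by rewrite -cabsN opprB. Qed.

Lemma cabs0 : cabs (0 : C) = 0.
Proof. by apply: complexI; rewrite cabsC normr0. Qed.

Lemma cabs_eq0 z : cabs z = 0 -> z = 0.
Proof. by move=> h; apply/eqP; rewrite -normr_eq0 -cabsC h. Qed.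

Lemma cabsX z n : cabs (z ^+ n) = cabs z ^+ n.
Proof. by apply: complexI; rewrite rmorphXn /= !cabsC normrX. Qed.

Lemma cabs_sum n (u : nat -> C) :
  cabs (\sum_(m < n) u m) <= \sum_(m < n) cabs (u m).
Proof.
elim: n => [|n IH]; first by rewrite !big_ord0 cabs0.
by rewrite !big_ord_recr /=; apply: le_trans (cabsD _ _) _; exact: lerD.
Qed.

Lemma cabs_ofR x : 0 <= x -> cabs (ofR x) = x.
Proof. by move=> h; rewrite /cabs /= expr0n /= addr0 sqrtr_sqr ger0_norm. Qed.

Lemma normr_Re_le z : `|Re z| <= cabs z.
Proof.
case: z => a b; rewrite /cabs /= -(sqrtr_sqr a) ler_sqrt ?lerDl ?sqr_ge0 //.
by rewrite addr_ge0 ?sqr_ge0.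
Qed.

Lemma normr_Im_le z : `|Im z| <= cabs z.
Proof.
case: z => a b; rewrite /cabs /= -(sqrtr_sqr b) ler_sqrt ?lerDr ?sqr_ge0 //.
by rewrite addr_ge0 ?sqr_ge0.
Qed.

Lemma complex_ext z w : Re z = Re w -> Im z = Im w -> z = w.
Proof. by case: z w => ? ? [] /= ? ? -> ->. Qed.

Lemma ReD z w : Re (z + w) = Re z + Re w. Proof. by case: z w => ? ? []. Qed.
Lemma ImD z w : Im (z + w) = Im z + Im w. Proof. by case: z w => ? ? []. Qed.
Lemma ReN z : Re (- z) = - Re z. Proof. by case: z. Qed.
Lemma ImN z : Im (- z) = - Im z. Proof. by case: z. Qed.
Lemma ReM z w : Re (z * w) = Re z * Re w - Im z * Im w.
Proof. by case: z w => ? ? []. Qed.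
Lemma ImM z w : Im (z * w) = Re z * Im w + Im z * Re w.
Proof. by case: z w => ? ? []. Qed.

Lemma ofRM x y : ofR x * ofR y = ofR (x * y) :> C.
Proof. by apply: complex_ext; rewrite ?ReM ?ImM /=; ring. Qed.

Lemma cisD x y : cis (x + y) = cis x * cis y.
Proof.
by rewrite /cis sinD cosD; apply/eqP; rewrite eq_complex /= !eqxx /= addrC.
Qed.

Lemma cis0 : cis (0 : R) = 1.
Proof. by rewrite /cis sin0 cos0. Qed.

Lemma cabs_cis x : cabs (cis x) = 1.
Proof. by rewrite /cabs /= cos2Dsin2 sqrtr1. Qed.

Lemma cisX x n : cis x ^+ n = cis (n%:R * x).
Proof.
elim: n => [|n IH]; first by rewrite expr0 mul0r cis0.
by rewrite exprSr IH -cisD mulrSr mulrDl mul1r.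
Qed.

End ComplexModulus.

Section IntegralsOverPeriod.
Context {R : realType}.
Local Notation mu := (@lebesgue_measure R).
Implicit Types (r t : R).

Lemma twopi_gt0 : 0 < 2 * pi :> R.
Proof. by rewrite mulr_gt0 ?pi_gt0. Qed.

Lemma measurable_Iv : measurable (@Iv R).
Proof. exact: measurable_itv. Qed.

Lemma lebesgue_measure_Iv : mu (@Iv R) = (2 * pi)%:E.
Proof. by rewrite /Iv lebesgue_measure_itv /= lte_fin twopi_gt0 oppr0 adde0. Qed.

Lemma continuous_integrable_Iv (h : R -> R) :
  continuous h -> mu.-integrable (@Iv R) (EFin \o h).
Proof.
move=> ch; apply: continuous_compact_integrable; first exact: segment_compact.
exact: continuous_subspaceT.
Qed.

Lemma is_derive_continuous (F dF : R -> R) :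
  (forall t, is_derive t 1 F (dF t)) -> continuous F.
Proof.
move=> h t; apply/differentiable_continuous/derivable1_diffP.
by case: (h t).
Qed.

Lemma Rintegral_Iv_derive (f F : R -> R) :
  (forall t, is_derive t 1 F (f t)) -> continuous f ->
  \int[mu]_(t in @Iv R) f t = F (2 * pi) - F 0.
Proof.
move=> dF cf.
rewrite /Rintegral /Iv (@continuous_FTC2 _ f F 0 (2 * pi) twopi_gt0) //.
- exact: continuous_subspaceT.
- have cF := @is_derive_continuous F f dF.
  split.
  + by move=> x _; case: (dF x).
  + by apply: cvg_at_right_filter; exact: cF.
  + by apply: cvg_at_left_filter; exact: cF.
- by move=> x _; rewrite derive1E; case: (dF x).
Qed.

Lemma is_derive_mull r t : is_derive t 1 ( *%R r) r.
Proof.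
have -> : ( *%R r) = r \*: (@id R) by apply/funext => u.
by apply: is_derive_eq; exact: mulr1.
Qed.

Lemma is_derive_sin_mull r t :
  is_derive t 1 (fun u => sin (r * u)) (cos (r * t) * r).
Proof. exact: (is_derive1_comp (is_derive_sin _) (is_derive_mull r t)). Qed.

Lemma is_derive_cos_mull r t :
  is_derive t 1 (fun u => cos (r * u)) (- sin (r * t) * r).
Proof. exact: (is_derive1_comp (is_derive_cos _) (is_derive_mull r t)). Qed.

Lemma continuous_sin_mull r : continuous (fun u : R => sin (r * u)).
Proof. exact: (@is_derive_continuous _ _ (is_derive_sin_mull r)). Qed.

Lemma continuous_cos_mull r : continuous (fun u : R => cos (r * u)).
Proof. exact: (@is_derive_continuous _ _ (is_derive_cos_mull r)). Qed.

Lemma Rintegral_Iv_cos_mull r : r != 0 -> sin (r * (2 * pi)) = 0 ->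
  \int[mu]_(t in @Iv R) cos (r * t) = 0.
Proof.
move=> r0 hs.
have dF t : is_derive t 1 (fun u => r^-1 * sin (r * u)) (cos (r * t)).
  have -> : (fun u => r^-1 * sin (r * u)) = r^-1 \*: (fun u => sin (r * u)).
    by apply/funext => u.
  have := is_deriveZ r^-1 (is_derive_sin_mull r t); move/is_derive_eq; apply.
  by rewrite /GRing.scale /= mulrCA mulVf // mulr1.
rewrite (@Rintegral_Iv_derive _ _ dF (continuous_cos_mull r)).
by rewrite /= hs mulr0 [r * 0]mulr0 sin0 mulr0 subrr.
Qed.

Lemma Rintegral_Iv_sin_mull r : r != 0 -> cos (r * (2 * pi)) = 1 ->
  \int[mu]_(t in @Iv R) sin (r * t) = 0.
Proof.
move=> r0 hc.
have dF t : is_derive t 1 (fun u => - r^-1 * cos (r * u)) (sin (r * t)).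
  have -> : (fun u => - r^-1 * cos (r * u)) = (- r^-1) \*: (fun u => cos (r * u)).
    by apply/funext => u.
  have := is_deriveZ (- r^-1) (is_derive_cos_mull r t); move/is_derive_eq; apply.
  by rewrite /GRing.scale /= [_ * r]mulrC mulrA mulNr mulrNN mulVf // mul1r.
rewrite (@Rintegral_Iv_derive _ _ dF (continuous_sin_mull r)).
by rewrite /= hc [r * 0]mulr0 cos0 subrr.
Qed.

Lemma nat_mul2piE (m : nat) : m%:R * (2 * pi) = 0 + (pi *+ 2) *+ m :> R.
Proof. by rewrite add0r !mulr_natl. Qed.

Lemma sin_nat_mul2pi (m : nat) : sin (m%:R * (2 * pi)) = 0 :> R.
Proof. by rewrite nat_mul2piE (periodicn (@sinD2pi R)) sin0. Qed.

Lemma cos_nat_mul2pi (m : nat) : cos (m%:R * (2 * pi)) = 1 :> R.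
Proof. by rewrite nat_mul2piE (periodicn (@cosD2pi R)) cos0. Qed.

End IntegralsOverPeriod.

Section ComplexIntegral.
Context {R : realType}.
Local Notation C := R[i].
Local Notation mu := (@lebesgue_measure R).
Local Notation Re := complex.Re.
Local Notation Im := complex.Im.
Implicit Types (h : R -> C) (c : C).

Definition ccontinuous h :=
  continuous (fun t => Re (h t)) /\ continuous (fun t => Im (h t)).

Lemma ccontinuousD h1 h2 : ccontinuous h1 -> ccontinuous h2 ->
  ccontinuous (fun t => h1 t + h2 t).
Proof.
move=> [r1 i1] [r2 i2]; split.
  have -> : (fun t => Re (h1 t + h2 t)) = (fun t => Re (h1 t) + Re (h2 t)).
    by apply/funext => t; rewrite ReD.
  by move=> t; exact: continuousD (r1 t) (r2 t).
have -> : (fun t => Im (h1 t + h2 t)) = (fun t => Im (h1 t) + Im (h2 t)).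
  by apply/funext => t; rewrite ImD.
by move=> t; exact: continuousD (i1 t) (i2 t).
Qed.

Lemma ccontinuousM h1 h2 : ccontinuous h1 -> ccontinuous h2 ->
  ccontinuous (fun t => h1 t * h2 t).
Proof.
move=> [r1 i1] [r2 i2]; split.
  have -> : (fun t => Re (h1 t * h2 t)) =
      (fun t => Re (h1 t) * Re (h2 t) - Im (h1 t) * Im (h2 t)).
    by apply/funext => t; rewrite ReM.
  move=> t.
  exact: continuousB (continuousM (r1 t) (r2 t)) (continuousM (i1 t) (i2 t)).
have -> : (fun t => Im (h1 t * h2 t)) =
    (fun t => Re (h1 t) * Im (h2 t) + Im (h1 t) * Re (h2 t)).
  by apply/funext => t; rewrite ImM.
move=> t.
exact: continuousD (continuousM (r1 t) (i2 t)) (continuousM (i1 t) (r2 t)).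
Qed.

Lemma ccontinuous_cst c : ccontinuous (fun _ => c).
Proof. by split; apply: cst_continuous. Qed.

Lemma ccontinuous_cis_mull r : ccontinuous (fun t => cis (r * t)).
Proof. by split; [exact: continuous_cos_mull | exact: continuous_sin_mull]. Qed.

Lemma ccontinuous_sum n (h : nat -> R -> C) : (forall m, ccontinuous (h m)) ->
  ccontinuous (fun t => \sum_(m < n) h m t).
Proof.
move=> hc; elim: n => [|n IH].
  have -> : (fun t => \sum_(m < 0) h m t) = (fun _ => 0).
    by apply/funext => t; rewrite big_ord0.
  exact: ccontinuous_cst.
have -> : (fun t => \sum_(m < n.+1) h m t) =
    (fun t => \sum_(m < n) h m t + h n t).
  by apply/funext => t; rewrite big_ord_recr.
exact: ccontinuousD.
Qed.

Lemma cintD h1 h2 : ccontinuous h1 -> ccontinuous h2 ->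
  cint (fun t => h1 t + h2 t) = cint h1 + cint h2.
Proof.
move=> [r1 i1] [r2 i2]; rewrite /cint.
under eq_Rintegral do rewrite ReD.
under [X in (_ +i* X)%C]eq_Rintegral do rewrite ImD.
rewrite !RintegralD //;
  exact: continuous_integrable_Iv || exact: measurable_Iv.
Qed.

Lemma cintZ c h : ccontinuous h -> cint (fun t => c * h t) = c * cint h.
Proof.
move=> [rh ih].
have cZ (u : R -> R) a : continuous u ->
    mu.-integrable (@Iv R) (EFin \o (fun t => a * u t)).
  move=> cu; apply: continuous_integrable_Iv => t.
  exact: continuousM (@cst_continuous _ _ a t) (cu t).
rewrite /cint.
under eq_Rintegral do rewrite ReM.
under [X in (_ +i* X)%C]eq_Rintegral do rewrite ImM.
rewrite RintegralB ?RintegralD ?cZ //; try exact: measurable_Iv.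
rewrite !RintegralZl //;
  try exact: measurable_Iv; try exact: continuous_integrable_Iv.
by case: c.
Qed.

Lemma cint_sum n (h : nat -> R -> C) : (forall m, ccontinuous (h m)) ->
  cint (fun t => \sum_(m < n) h m t) = \sum_(m < n) cint (h m).
Proof.
move=> hc; elim: n => [|n IH].
  rewrite big_ord0 /cint.
  under eq_Rintegral do rewrite big_ord0.
  under [X in (_ +i* X)%C]eq_Rintegral do rewrite big_ord0.
  by rewrite /= Rintegral_cst ?mul0r //; exact: measurable_Iv.
rewrite big_ord_recr /= -IH -cintD; last exact: hc; last exact: ccontinuous_sum.
by congr cint; apply/funext => t; rewrite big_ord_recr.
Qed.

Lemma cint_cis_orthogonal (c : C) (m k : nat) :
  cint (fun t => c * cis ((m%:R - k%:R) * t)) =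
  if m == k then c * ofR (2 * pi) else 0.
Proof.
rewrite cintZ; last exact: ccontinuous_cis_mull.
case: eqP => [->|/eqP mk].
  rewrite /cint /=; under eq_Rintegral do rewrite subrr mul0r cos0.
  under [X in (_ +i* X)%C]eq_Rintegral do rewrite subrr mul0r sin0.
  rewrite /= !Rintegral_cst; try exact: measurable_Iv.
  rewrite [fine _](_ : _ = 2 * pi) ?mul1r ?mul0r //.
  exact: (congr1 fine lebesgue_measure_Iv).
have mk0 : m%:R - k%:R != 0 :> R by rewrite subr_eq0 eqr_nat.
rewrite /cint /= Rintegral_Iv_cos_mull ?Rintegral_Iv_sin_mull ?mulr0 //.
- by rewrite mulrBl cosB !sin_nat_mul2pi !cos_nat_mul2pi !mulr0 mulr1 addr0.
- by rewrite mulrBl sinB !sin_nat_mul2pi !cos_nat_mul2pi !mul0r !mulr0 subrr.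
Qed.

End ComplexIntegral.

Section CauchyCoefficientFormula.
Context {R : realType}.
Local Notation C := R[i].
Local Notation mu := (@lebesgue_measure R).
Local Notation Re := complex.Re.
Local Notation Im := complex.Im.
Implicit Types (z : C).

Lemma cvg0_eventually_lt {u : nat -> R} {e : R} : u @ \oo --> 0 -> 0 < e ->
  exists N, forall n, (N <= n)%N -> `|u n| < e.
Proof.
move=> /cvgrPdist_lt h e0; have [N _ HN] := h e e0.
by exists N => n Nn; have := HN n Nn; rewrite sub0r normrN.
Qed.

Lemma ccvg_Re (u : nat -> C) l : ccvg u l -> (fun n => Re (u n)) @ \oo --> Re l.
Proof.
move=> h; apply/cvgrPdist_lt => e e0; have [N HN] := cvg0_eventually_lt h e0.
exists N => // n /= Nn; have := HN n Nn.
rewrite ger0_norm ?cabs_ge0 // cabsB => H.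
by apply: le_lt_trans H; rewrite -ReN -ReD; apply: normr_Re_le.
Qed.

Lemma ccvg_Im (u : nat -> C) l : ccvg u l -> (fun n => Im (u n)) @ \oo --> Im l.
Proof.
move=> h; apply/cvgrPdist_lt => e e0; have [N HN] := cvg0_eventually_lt h e0.
exists N => // n /= Nn; have := HN n Nn.
rewrite ger0_norm ?cabs_ge0 // cabsB => H.
by apply: le_lt_trans H; rewrite -ImN -ImD; apply: normr_Im_le.
Qed.

Lemma Rintegral_Iv_dominated_limit (u : nat -> R -> R) (v : R -> R) (B c : R) N :
  (forall n, continuous (u n)) -> (forall t, u ^~ t @ \oo --> v t) ->
  (forall n t, `|u n t| <= B) ->
  (forall n, (N <= n)%N -> \int[mu]_(t in @Iv R) u n t = c) ->
  \int[mu]_(t in @Iv R) v t = c.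
Proof.
move=> cu uv uB uc.
have iu n := @continuous_integrable_Iv _ _ (cu n).
have mu_ n := measurable_int _ (iu n).
have mv := proj2 (measurable_realfun.measurable_EFinP _ _)
  (measurable_realfun.measurable_fun_cvg
    (fun m => proj1 (measurable_realfun.measurable_EFinP _ _) (mu_ m))
    (fun t _ => uv t)).
have uv_ae : {ae mu, forall t : measurableTypeR R,
    (@Iv R) t -> (EFin \o u n) t @[n --> \oo] --> (EFin \o v) t}.
  by apply: aeW => t _; apply: cvg_EFin; [exact: nearW | exact: uv].
have uB_ae : {ae mu, forall (t : measurableTypeR R) n,
    (@Iv R) t -> (`|(EFin \o u n) t| <= (cst B%:E) t)%E}.
  by apply: aeW => t n _ /=; rewrite lee_fin.
have iB := @continuous_integrable_Iv _ _ (@cst_continuous _ _ B).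
have mI : measurable ((@Iv R) : set (measurableTypeR R)) by exact: measurable_Iv.
have [_ _ cvgI] := dominated_convergence mI mu_ mv uv_ae iB uB_ae.
have cst_c : [sequence (\int[mu]_(t in @Iv R) (EFin \o u n) t)%E]_n @ \oo --> c%:E.
  apply: cvg_near_cst; exists N => // n /= Nn.
  rewrite -(uc n Nn) /Rintegral fineK //.
  exact: (integrable_fin_num mI (iu n)).
by rewrite /Rintegral (cvg_unique _ cvgI cst_c).
Qed.

Lemma geometric_sum_le (q : R) n : 0 <= q < 1 ->
  \sum_(m < n) q ^+ m <= (1 - q)^-1.
Proof.
case/andP => q0 q1.
have h : (\sum_(m < n) q ^+ m) * (1 - q) = 1 - q ^+ n.
  elim: n => [|n IH]; first by rewrite big_ord0 mul0r expr0 subrr.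
  by rewrite big_ord_recr /= mulrDl IH exprSr; ring.
by rewrite -[X in _ <= X]mul1r ler_pdivlMr ?subr_gt0 // h lerBlDr lerDl exprn_ge0.
Qed.

Lemma ler_sum_term (u : nat -> R) N m : (m < N)%N -> (forall j, 0 <= u j) ->
  u m <= \sum_(j < N) u j.
Proof.
move=> mN u0; rewrite (bigD1 (Ordinal mN)) //= lerDl.
by apply: sumr_ge0 => j _.
Qed.

(* A power series converging at the real point s = (1 + |z|)/2 has bounded terms
   there, so the absolute series at |z| is dominated by a geometric series of
   ratio |z|/s. *)
Lemma power_series_abs_sum_bounded {b : nat -> C} {F : C -> C} {z : C} :
  power_series_on b F (@disc R) -> cabs z < 1 ->
  exists B, forall n, \sum_(m < n) cabs (b m) * cabs z ^+ m <= B.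
Proof.
move=> hps z1.
set rho := cabs z; set s := (1 + rho) / 2.
have rho0 : 0 <= rho by apply: cabs_ge0.
have rho1 : rho < 1 := z1.
have s0 : 0 < s by rewrite /s; lra.
have s1 : s < 1 by rewrite /s; lra.
have rhos : rho < s by rewrite /s; lra.
have cw : cabs (ofR s) = s by rewrite cabs_ofR // ltW.
have dw : disc (ofR s) by rewrite /disc /= cw.
have [N HN] := cvg0_eventually_lt (hps (ofR s) dw) ltr01.
set P := fun n => \sum_(k < n) b k * ofR s ^+ k.
set S := \sum_(j < N) cabs (b j) * s ^+ j.
have S0 : 0 <= S.
  by apply: sumr_ge0 => j _; rewrite mulr_ge0 ?cabs_ge0 ?exprn_ge0 ?ltW.
have hT m : cabs (b m) * s ^+ m <= 2 + S.
  have e : cabs (b m) * s ^+ m = cabs (P m.+1 - P m).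
    by rewrite /P big_ord_recr /= addrC addrK cabsM cabsX cw.
  case: (leqP N m) => [Nm | mN].
    rewrite e (_ : P m.+1 - P m = (P m.+1 - F (ofR s)) + (F (ofR s) - P m)).
      apply: le_trans (cabsD _ _) _.
      have h1 := HN m.+1 (leqW Nm); have h2 := HN m Nm.
      rewrite ger0_norm ?cabs_ge0 // in h1.
      rewrite ger0_norm ?cabs_ge0 // cabsB in h2.
      lra.
    by rewrite addrA subrK.
  suff : cabs (b m) * s ^+ m <= S by lra.
  apply: (@ler_sum_term (fun j => cabs (b j) * s ^+ j)) => // j.
  by rewrite mulr_ge0 ?cabs_ge0 ?exprn_ge0 ?ltW.
set q := rho / s.
have q0 : 0 <= q by rewrite divr_ge0 // ltW.
have q1 : q < 1 by rewrite /q ltr_pdivrMr // mul1r.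
exists ((2 + S) * (1 - q)^-1) => n.
apply: (le_trans (y := \sum_(m < n) (2 + S) * q ^+ m)).
  apply: ler_sum => m _.
  have -> : rho ^+ m = s ^+ m * q ^+ m by rewrite -exprMn /q mulrC divfK // gt_eqF.
  by rewrite mulrA ler_wpM2r // exprn_ge0.
by rewrite -mulr_sumr ler_wpM2l ?geometric_sum_le ?q0 ?q1 //; lra.
Qed.

(* Dominated convergence justifies integrating the series term by term; only
   the k-th term survives by orthogonality. *)
Lemma cint_taylor_coef (b : nat -> C) (F : C -> C) z (k : nat) :
  power_series_on b F (@disc R) -> cabs z < 1 ->
  ofR (2 * pi)^-1 * cint (fun t => F (z * cis t) * cis (- k%:R * t)) =
  b k * z ^+ k.
Proof.
move=> hps z1.
have [B HB] := power_series_abs_sum_bounded hps z1.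
pose term m t := b m * z ^+ m * cis ((m%:R - k%:R) * t).
pose S n t := \sum_(m < n) term m t.
pose phi t := F (z * cis t) * cis (- k%:R * t).
have termC m : ccontinuous (term m).
  by apply: ccontinuousM; [exact: ccontinuous_cst | exact: ccontinuous_cis_mull].
have SB n t : cabs (S n t) <= B.
  apply: le_trans (cabs_sum n (term ^~ t)) _; apply: le_trans (HB n).
  by apply: ler_sum => m _; rewrite !cabsM cabsX cabs_cis mulr1.
have S_phi t : ccvg (S ^~ t) (phi t).
  have dz : disc (z * cis t) by rewrite /disc /= cabsM cabs_cis mulr1.
  have E n : cabs (S n t - phi t) =
      cabs (\sum_(m < n) b m * (z * cis t) ^+ m - F (z * cis t)).
    have -> : S n t =
        (\sum_(m < n) b m * (z * cis t) ^+ m) * cis (- k%:R * t).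
      rewrite mulr_suml; apply: eq_bigr => m _.
      by rewrite /term exprMn cisX mulrDl cisD !mulrA.
    by rewrite /phi -mulrBl cabsM cabs_cis mulr1.
  by rewrite /ccvg (funext E); exact: hps.
pose I := b k * z ^+ k * ofR (2 * pi).
have intS n : (k < n)%N -> cint (S n) = I.
  move=> kn; rewrite /S cint_sum //.
  under eq_bigr do rewrite cint_cis_orthogonal.
  by rewrite -big_mkcond (big_ord1_eq _ (fun i => b i * z ^+ i * _)) kn.
have -> : cint phi = I.
  apply: complex_ext; rewrite /cint /=.
  - apply: (@Rintegral_Iv_dominated_limit (fun n t => Re (S n t)) _ B _ k.+1).
    + by move=> n; case: (ccontinuous_sum n term termC).
    + by move=> t; exact: ccvg_Re (S_phi t).
    + by move=> n t; exact: le_trans (normr_Re_le _) (SB n t).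
    + by move=> n kn; rewrite -(intS n kn).
  - apply: (@Rintegral_Iv_dominated_limit (fun n t => Im (S n t)) _ B _ k.+1).
    + by move=> n; case: (ccontinuous_sum n term termC).
    + by move=> t; exact: ccvg_Im (S_phi t).
    + by move=> n t; exact: le_trans (normr_Im_le _) (SB n t).
    + by move=> n kn; rewrite -(intS n kn).
rewrite /I mulrCA ofRM mulVf ?mulr1 //; last by rewrite gt_eqF // twopi_gt0.
Qed.

End CauchyCoefficientFormula.

Section GaussianIntegers.
Context {R : realType}.
Local Notation C := R[i].
Local Notation Re := complex.Re.
Local Notation Im := complex.Im.

Lemma int_eq_of_dist_lt1 (x y : R) : x \is a Num.int -> y \is a Num.int ->
  `|x - y| < 1 -> x = y.
Proof.
move=> /intrP[m ->] /intrP[n ->]; rewrite -rmorphB /= -intr_norm.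
rewrite (_ : 1 = 1%:~R) // ltr_int -[1]add0r ltzD1 normr_le0 subr_eq0 => /eqP.
by move->.
Qed.

(* If x differed from an integer y0 within 1/2 of it, an integer within
   |x - y0|/2 of x would be a second integer at distance < 1 from y0. *)
Lemma int_closed (x : R) :
  (forall e, 0 < e -> exists2 y, y \is a Num.int & `|x - y| < e) ->
  x \is a Num.int.
Proof.
move=> H.
have [y0 iy0 h0] : exists2 y, y \is a Num.int & `|x - y| < 1 / 2.
  by apply: H; lra.
case: (eqVneq x y0) => [->//|ne].
set d := `|x - y0|.
have d0 : 0 < d by rewrite /d normr_gt0 subr_eq0.
have [y iy hy] : exists2 y, y \is a Num.int & `|x - y| < d / 2.
  by apply: H; lra.
suff yy0 : y = y0 by move: hy; rewrite yy0 -/d; lra.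
apply: int_eq_of_dist_lt1 => //.
have := ler_distD x y y0; rewrite [`|y - x|]distrC -/d.
move: h0; rewrite -/d; lra.
Qed.

Definition gauss_int (z : C) := Re z \is a Num.int /\ Im z \is a Num.int.

Lemma gauss_int_closed (z : C) :
  (forall e, 0 < e -> exists2 w, gauss_int w & cabs (z - w) < e) ->
  gauss_int z.
Proof.
move=> H; split; apply: int_closed => e /H [w [Rw Iw] zw].
- by exists (Re w) => //; rewrite -ReN -ReD; apply: le_lt_trans (normr_Re_le _) zw.
- by exists (Im w) => //; rewrite -ImN -ImD; apply: le_lt_trans (normr_Im_le _) zw.
Qed.

Lemma gauss_int_eq0 (z : C) : gauss_int z -> cabs z < 1 -> z = 0.
Proof.
move=> [Rz Iz] z1; have i0 : (0 : R) \is a Num.int by [].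
apply: complex_ext; apply: int_eq_of_dist_lt1; rewrite ?subr0 //.
- exact: le_lt_trans (normr_Re_le _) z1.
- exact: le_lt_trans (normr_Im_le _) z1.
Qed.

End GaussianIntegers.

Section PowerSeries.
Context {R : realType}.
Local Notation C := R[i].
Implicit Types (A : set C) (a c : nat -> C).

Lemma ccvg_eventually_cst (u : nat -> C) l N :
  (forall n, (N <= n)%N -> u n = l) -> ccvg u l.
Proof.
move=> h; apply: cvg_near_cst; exists N => // n /= Nn.
by rewrite h // subrr cabs0.
Qed.

Lemma ccvg_unique (u : nat -> C) l l' : ccvg u l -> ccvg u l' -> l = l'.
Proof.
move=> hl hl'; apply/eqP; rewrite -subr_eq0; apply/eqP; apply: cabs_eq0.
apply/eqP; rewrite eq_le cabs_ge0 andbT.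
rewrite leNgt; apply/negP => l0.
have l2 : 0 < cabs (l - l') / 2 by lra.
have [N1 H1] := cvg0_eventually_lt hl l2.
have [N2 H2] := cvg0_eventually_lt hl' l2.
set m := maxn N1 N2.
have h1 := H1 m (leq_maxl _ _); have h2 := H2 m (leq_maxr _ _).
rewrite !ger0_norm ?cabs_ge0 // in h1 h2.
have := cabsD (l - u m) (u m - l'); rewrite addrA subrK [cabs (l - u m)]cabsB; lra.
Qed.

Lemma power_series_poly (q : {poly C}) A :
  power_series_on (fun m => q`_m) (horner q) A.
Proof.
move=> z _; apply: (@ccvg_eventually_cst _ _ (size q)) => n qn.
by rewrite (horner_coef_wide z qn).
Qed.

Lemma entire_poly (q : {poly C}) : entire (horner q).
Proof. by exists (fun m => q`_m); exact: power_series_poly. Qed.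

Lemma power_series_sub a c (f g : C -> C) A :
  power_series_on a f A -> power_series_on c g A ->
  power_series_on (fun m => a m - c m) (fun z => f z - g z) A.
Proof.
move=> ha hc z Az; apply/cvgrPdist_lt => e e0.
have e2 : 0 < e / 2 by lra.
have [N1 H1] := cvg0_eventually_lt (ha z Az) e2.
have [N2 H2] := cvg0_eventually_lt (hc z Az) e2.
exists (maxn N1 N2) => // n /= Nn.
have := H1 n (leq_trans (leq_maxl _ _) Nn).
have := H2 n (leq_trans (leq_maxr _ _) Nn).
rewrite sub0r normrN !ger0_norm ?cabs_ge0 //.
have -> : \sum_(k < n) (a k - c k) * z ^+ k - (f z - g z) =
    (\sum_(k < n) a k * z ^+ k - f z) - (\sum_(k < n) c k * z ^+ k - g z).
  under eq_bigr do rewrite mulrBl.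
  by rewrite sumrB; ring.
set da := \sum_(k < n) a k * z ^+ k - f z.
set dc := \sum_(k < n) c k * z ^+ k - g z.
by have := cabsD da (- dc); rewrite cabsN; lra.
Qed.

Lemma power_series_finite_support a f A K :
  power_series_on a f A -> (forall k, (K <= k)%N -> a k = 0) ->
  forall z, A z -> f z = (\poly_(i < K) a i).[z].
Proof.
move=> ha aK z Az; apply: ccvg_unique (ha z Az) _.
apply: (ccvg_eventually_cst _ _ K) => n Kn.
rewrite (horner_coef_wide z (leq_trans (size_poly K a) Kn)).
by apply: eq_bigr => i _; rewrite coef_poly; case: ltnP => // /aK ->.
Qed.

Lemma bernoulli_ler (x : R) n : 0 <= x -> 1 + n%:R * x <= (1 + x) ^+ n.
Proof.
move=> x0; elim: n => [|n IH]; first by rewrite mul0r addr0 expr0.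
rewrite exprSr -natr1 mulrDl mul1r.
have : 0 <= n%:R * x by rewrite mulr_ge0.
nra.
Qed.

(* |a_k| r^k <= M with r > 1 forces |a_k| < 1 once k (r - 1) > |M|. *)
Lemma conv_radius_gt1_coef_lt1 a : (1 < conv_radius a)%E ->
  exists K, forall k, (K <= k)%N -> cabs (a k) < 1.
Proof.
move=> /ereal_sup_gt[_ [r [r0 [M hM]] <-]]; rewrite lte_fin => r1.
have r10 : 0 < r - 1 by lra.
have b0 : 0 <= `|M| / (r - 1) by rewrite divr_ge0 ?normr_ge0 // ltW.
exists (Num.Def.archi_bound (`|M| / (r - 1))) => k Kk.
have hk : `|M| < k%:R * (r - 1).
  rewrite -ltr_pdivrMr //; apply: lt_le_trans (archi_boundP b0) _.
  by rewrite ler_nat.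
have := bernoulli_ler (r - 1) k (ltW r10); rewrite [1 + (r - 1)]addrC subrK => hb.
have := hM k; have := ler_norm M; have := cabs_ge0 (a k).
have : 0 < r ^+ k by rewrite exprn_gt0 // (lt_trans ltr01).
nra.
Qed.

End PowerSeries.

Section BanachFunSpaceCoefficients.
Context {R : realType}.
Local Notation C := R[i].
Context {X : set (C -> C)} {nrm : (C -> C) -> R}.
Hypotheses (HX : BanachFunSpace X nrm) (Hent : contains_entire X)
  (Hconv : conv_ineq X nrm).

Lemma BanachFunSpace_sub_poly f (q : {poly C}) :
  X f -> X (fun z => f z - q.[z]).
Proof.
move=> Xf; have := bfs_add HX Xf (bfs_scale HX (-1) (Hent _ (entire_poly q))).
by congr X; apply/funext => z; rewrite mulN1r.
Qed.

Lemma BanachFunSpace_monomial k : X (fun z => z ^+ k).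
Proof.
have := Hent _ (entire_poly 'X^k).
by congr X; apply/funext => z; rewrite hornerXn.
Qed.

Lemma nrm_monomial_gt0 k : 0 < nrm (fun z => z ^+ k).
Proof.
have Xk := BanachFunSpace_monomial k.
rewrite lt_neqAle (bfs_ge0 HX Xk) andbT; apply/eqP => h.
have h12 : cabs (ofR (1 / 2 : R)) = 1 / 2 by rewrite cabs_ofR //; lra.
have d12 : disc (ofR (1 / 2 : R)) by rewrite /disc /= h12; lra.
have /eqP := bfs_eq0 HX Xk (esym h) d12.
rewrite expf_eq0 => /andP[_ /eqP h0].
by move: h12; rewrite h0 cabs0; lra.
Qed.

Lemma taylor_coef_bounded (k : nat) : exists Ck : R, forall g b,
  X g -> power_series_on b g (@disc R) ->
  cabs (b k) * nrm (fun z => z ^+ k) <= Ck * nrm g.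
Proof.
pose e (t : R) := cis (- k%:R * t).
exists ((2 * pi)^-1 * Rintegral lebesgue_measure (@Iv R) (fun t => cabs (e t))).
move=> g b Xg hb.
have Le : L1 e.
  split; exact: continuous_integrable_Iv (continuous_cos_mull _) ||
                exact: continuous_integrable_Iv (continuous_sin_mull _).
have [_] := Hconv _ _ Xg Le.
have hE z : disc z ->
    ofR (2 * pi)^-1 * cint (fun t => g (z * cis t) * e t) = b k * z ^+ k.
  exact: cint_taylor_coef hb.
by rewrite (bfs_local HX hE).2 (bfs_homog HX _ (BanachFunSpace_monomial k)).
Qed.

Lemma taylor_coef_cvg {f : C -> C} {a : nat -> C} {p : nat -> {poly C}} :
  X f -> power_series_on a f (@disc R) ->
  (fun n => nrm (fun z => f z - (p n).[z])) @ \oo --> 0 ->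
  forall k, (fun n => cabs (a k - (p n)`_k)) @ \oo --> 0.
Proof.
move=> Xf ha hlim k.
have [Ck HCk] := taylor_coef_bounded k.
set mk := nrm (fun z => z ^+ k); have mk0 : 0 < mk := nrm_monomial_gt0 k.
apply: (@squeeze_cvgr _ \oo _ _ (cst 0)
  (fun n => Ck / mk * nrm (fun z => f z - (p n).[z])) _ _ 0).
- exists 0%N => // n _; rewrite /= cabs_ge0 /= mulrAC ler_pdivlMr //.
  apply: (HCk _ (fun m => a m - (p n)`_m)); first exact: BanachFunSpace_sub_poly.
  exact: power_series_sub ha (power_series_poly (p n) _).
- exact: cvg_cst.
- by rewrite -(mulr0 (Ck / mk)); apply: cvgMl_tmp.
Qed.

End BanachFunSpaceCoefficients.

Theorem corollary5p1 (R : realType) (X : set (R[i] -> R[i]))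
  (nrm : (R[i] -> R[i]) -> R)
  (HX : BanachFunSpace X nrm) (H1 : rot_invariant X nrm)
  (H2 : contains_entire X) (H3 : conv_ineq X nrm)
  (f : R[i] -> R[i]) (hf : X f) (hnp : ~ is_poly_on_disc f)
  (p : nat -> {poly R[i]}) (hp : forall n, int_poly n (p n))
  (hlim : (fun n => nrm (fun z => f z - (p n).[z])) @ \oo --> 0%R) :
  forall a : nat -> R[i], power_series_on a f (disc (R:=R)) ->
    (conv_radius a <= 1)%E.
Proof.
move=> a ha.
have gauss_a k : gauss_int (a k).
  have cvg_k := taylor_coef_cvg HX H2 H3 hf ha hlim k.
  apply: gauss_int_closed => e e0; have [n hn] := cvg0_eventually_lt cvg_k e0.
  exists (p n)`_k; first exact: (hp n).2 k.
  by move: (hn n (leqnn n)); rewrite ger0_norm ?cabs_ge0.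
rewrite leNgt; apply/negP => /conv_radius_gt1_coef_lt1 [K hK].
apply: hnp; exists (\poly_(i < K) a i).
apply: power_series_finite_support ha _ => k Kk.
exact: gauss_int_eq0 (gauss_a k) (hK k Kk).
Qed.
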